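(* Let $A$ be a cubical set. The formula $\forall (i:\mathbb{I})\,\forall(j:\mathbb{I})\,\forall(f:\mathbb{I}\to A).\ f(i)=f(j)$ holds in the internal logic of $\widehat{\mathcal{C}}$ if and only if $A\cong\Delta(a)$ for some set $a$.
   Context: $\mathcal{C}$ is the category of cubes: objects finite sets of names, morphisms $I\to J$ functions $J\to\mathrm{dM}(I)$ with $\mathrm{dM}(I)$ the free De Morgan algebra on $I$, composition by substitution. $\widehat{\mathcal{C}}$ is the presheaf topos of cubical sets; $\mathbb{I}$ is the presheaf $I\mapsto\mathrm{dM}(I)$. $\Delta:\mathrm{Set}\to\widehat{\mathcal{C}}$ is the constant presheaf functor. *)

From mathcomp Require Import all_boot.
Set Implicit Arguments. Unset Strict Implicit. Unset Printing Implicit Defensive.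

(* The free De Morgan algebra dM(n) on the n names 'I_n.                    *)
(* Concrete model: the free bounded distributive lattice on the 2n          *)
(* generators {x_i, x_i'} is the lattice of monotone boolean functions on   *)
(* bool^n * bool^n (pointwise order); the De Morgan negation is             *)
(*   (~ t)(x, y) = ~~ t(~~y, ~~x)   (swaps x_i and x_i' = 1 - i).           *)

Definition pt (n : nat) := ({ffun 'I_n -> bool} * {ffun 'I_n -> bool})%type.

Definition leb_pt n (p q : pt n) : bool :=
  [forall i, (p.1 i <= q.1 i) && (p.2 i <= q.2 i)].

Definition monob n (f : {ffun pt n -> bool}) : bool :=
  [forall p, forall q, leb_pt p q ==> (f p <= f q)].

Lemma monoP n (f : {ffun pt n -> bool}) :
  reflect (forall p q, leb_pt p q -> f p <= f q) (monob f).
Proof.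
apply: (iffP idP).
- by move=> /forallP H p q Hpq; move: (H p) => /forallP /(_ q) /implyP; apply.
- by move=> H; apply/forallP => p; apply/forallP => q; apply/implyP; apply: H.
Qed.

Definition dM (n : nat) := {f : {ffun pt n -> bool} | monob f}.

Lemma gen_mono n (i : 'I_n) : monob [ffun p : pt n => p.1 i].
Proof.
apply/monoP => p q /forallP /(_ i) /andP [H _]; by rewrite !ffunE.
Qed.
Definition gen n (i : 'I_n) : dM n := exist (@monob n) _ (gen_mono i).

Definition negpt n (p : pt n) : pt n :=
  ([ffun i => ~~ p.2 i], [ffun i => ~~ p.1 i]).
Lemma neg_mono n (t : dM n) : monob [ffun p => ~~ val t (negpt p)].
Proof.
apply/monoP => p q Hpq; rewrite !ffunE leq_eqVlt.
have : val t (negpt q) <= val t (negpt p).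
  move/monoP: (valP t) => Ht; apply: Ht; apply/forallP => i; rewrite !ffunE /=.
  move: Hpq => /forallP /(_ i) /andP [] /=.
  by case: (p.1 i); case: (q.1 i); case: (p.2 i); case: (q.2 i).
by do 2!case: (val t _).
Qed.
Definition dneg n (t : dM n) : dM n := exist (@monob n) _ (neg_mono t).

Lemma dM_le n (t : dM n) p q : leb_pt p q -> val t p <= val t q.
Proof. by move/monoP: (valP t); apply. Qed.

Lemma subst_mono m n (t : dM m) (s : 'I_m -> dM n) :
  monob [ffun p => val t ([ffun j => val (s j) p], [ffun j => val (dneg (s j)) p])].
Proof.
apply/monoP => p q Hpq; rewrite !ffunE; move/monoP: (valP t) => Ht; apply: Ht.
apply/forallP => j; rewrite !ffunE /=; apply/andP; split.
- by move/monoP: (valP (s j)); apply.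
- by have := dM_le (dneg (s j)) Hpq; rewrite /= !ffunE.
Qed.
Definition subst m n (t : dM m) (s : 'I_m -> dM n) : dM n :=
  exist (@monob n) _ (subst_mono t s).

(* The category of cubes C (skeleton: the object n is the set of names     *)
(* 'I_n).  A morphism n -> m is a function 'I_m -> dM n; composition is    *)
(* substitution.                                                            *)

Definition hom (n m : nat) := 'I_m -> dM n.
Definition idh (n : nat) : hom n n := fun i => gen i.
Definition comp n m k (g : hom m k) (f : hom n m) : hom n k :=
  fun x => subst (g x) f.

Record cset := CSet {
  cobj :> nat -> Type;
  cact : forall n m, hom n m -> cobj m -> cobj n;
  cact_id : forall n (x : cobj n), cact (@idh n) x = x;
  cact_comp : forall n m k (f : hom n m) (g : hom m k) (x : cobj k),
      cact (comp g f) x = cact f (cact g x)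
}.

Record nat_trans (A B : cset) := NatTrans {
  nt :> forall n, A n -> B n;
  nt_nat : forall n m (f : hom n m) (x : A m),
      nt (cact f x) = cact f (nt x)
}.

Definition cset_iso (A B : cset) : Prop :=
  exists (phi : nat_trans A B) (psi : nat_trans B A),
    (forall n (x : A n), psi n (phi n x) = x) /\
    (forall n (y : B n), phi n (psi n y) = y).

Definition Delta (a : Type) : cset :=
  @CSet (fun _ => a) (fun _ _ _ x => x) (fun _ _ => erefl) (fun _ _ _ _ _ _ => erefl).

(* The interval I : n |-> dM n, acting by substitution. *)
Definition Iact n m (f : hom n m) (t : dM m) : dM n := subst t f.

(* The exponential A^I at stage I: natural transformations y(I) x I -> A,
   i.e. families f_J : hom J I * dM J -> A J natural in J. *)
Record exp_el (A : cset) (I : nat) := ExpEl {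
  ef :> forall J, hom J I -> dM J -> A J;
  ef_nat : forall J J' (g : hom J' J) (h : hom J I) (t : dM J),
      ef (comp h g) (Iact g t) = cact g (ef h t)
}.

Definition ev (A : cset) I (f : exp_el A I) (i : dM I) : A I := f I (@idh I) i.

(* Interpretation of  forall (i:I) (j:I) (f:I -> A). f(i) = f(j)  in the
   internal logic: the equalizer of the two maps ev o (f,i), ev o (f,j) :
   I x I x A^I -> A is the whole object, i.e. the two maps agree at every
   stage and on every generalized element. *)
Definition forall_paths_const (A : cset) : Prop :=
  forall (I : nat) (i j : dM I) (f : exp_el A I), ev f i = ev f j.

From Pilot Require Import Defs.
From mathcomp Require Import all_boot.
From Stdlib Require Import FunctionalExtensionality.
Set Implicit Arguments. Unset Strict Implicit. Unset Printing Implicit Defensive.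

(* Both conditions amount to A being discrete: any two parallel cube maps
   f, f' : J -> I induce the same restriction A(I) -> A(J).  A discrete A is
   isomorphic to the constant presheaf on its vertices A(0).  If A satisfies
   the formula, f and f' are joined by the path t |-> (f /\ ~t) \/ (f' /\ t)
   of cube maps; evaluating the induced path in A at t = 0 and t = 1 gives
   the two restrictions of an element.  Conversely, given a path in a
   discrete A and points i, j of the interval at stage I, the same
   interpolation with a fresh name z gives a point at stage I+1 that
   restricts to i and j along the faces z = 0 and z = 1, and these two faces
   act alike on A. *)

Lemma dM_ext n (u v : dM n) : val u =1 val v -> u = v.
Proof. by move=> uv; apply: val_inj; apply/ffunP. Qed.

Definition subst_pt m n (s : 'I_m -> dM n) (p : pt n) : pt m :=
  ([ffun j => val (s j) p], [ffun j => ~~ val (s j) (negpt p)]).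

Lemma val_subst m n (t : dM m) (s : 'I_m -> dM n) p :
  val (subst t s) p = val t (subst_pt s p).
Proof. by rewrite ffunE; congr (val t (_, _)); apply/ffunP => j; rewrite !ffunE. Qed.

Lemma negptK n : involutive (@negpt n).
Proof. by case=> a b; congr (_, _); apply/ffunP => i; rewrite !ffunE negbK. Qed.

Lemma subst_pt_negpt m n (s : 'I_m -> dM n) p :
  subst_pt s (negpt p) = negpt (subst_pt s p).
Proof. by congr (_, _); apply/ffunP => j; rewrite !ffunE ?negptK ?negbK. Qed.

Lemma subst_pt_comp m n k (s : 'I_m -> dM n) (g : 'I_n -> dM k) p :
  subst_pt (fun j => subst (s j) g) p = subst_pt s (subst_pt g p).
Proof. by congr (_, _); apply/ffunP => j; rewrite [LHS]ffunE [RHS]ffunE val_subst ?subst_pt_negpt. Qed.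

Lemma subst_pt_idh n (p : pt n) : subst_pt (@idh n) p = p.
Proof. by case: p => a b; congr (_, _); apply/ffunP => i; rewrite !ffunE ?negbK. Qed.

Lemma subst_assoc m n k (t : dM m) (s : 'I_m -> dM n) (g : 'I_n -> dM k) :
  subst (subst t s) g = subst t (fun j => subst (s j) g).
Proof. by apply: dM_ext => p; rewrite !val_subst subst_pt_comp. Qed.

Lemma subst_gen m n (i : 'I_m) (s : 'I_m -> dM n) : subst (gen i) s = s i.
Proof. by apply: dM_ext => p; rewrite val_subst /= !ffunE. Qed.

Lemma subst_idh n (t : dM n) : subst t (@idh n) = t.
Proof. by apply: dM_ext => p; rewrite val_subst subst_pt_idh. Qed.

Lemma comp_assoc n m k l (h : hom k l) (g : hom m k) (f : hom n m) :
  Defs.comp h (Defs.comp g f) = Defs.comp (Defs.comp h g) f.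
Proof. by apply: functional_extensionality => x; rewrite /Defs.comp subst_assoc. Qed.

Lemma comp_idh n m (f : hom n m) : Defs.comp f (@idh n) = f.
Proof. by apply: functional_extensionality => x; rewrite /Defs.comp subst_idh. Qed.

Lemma const_mono n (b : bool) : monob [ffun _ : pt n => b].
Proof. by apply/monoP => p q _; rewrite !ffunE. Qed.
Definition dMconst n b : dM n := exist (@monob n) _ (const_mono n b).

(* The De Morgan term (x0 /\ ~x2) \/ (x1 /\ x2), as an element of the free
   algebra on three names: its instances [mux a b c] then commute with
   substitution by [subst_assoc]. *)
Definition mux_lo : 'I_3 := @Ordinal 3 0 isT.
Definition mux_hi : 'I_3 := @Ordinal 3 1 isT.
Definition mux_sel : 'I_3 := @Ordinal 3 2 isT.

Lemma mux3_mono :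
  monob [ffun p : pt 3 => p.1 mux_lo && p.2 mux_sel || p.1 mux_hi && p.1 mux_sel].
Proof.
apply/monoP => p q /forallP le_pq; rewrite !ffunE.
move: (le_pq mux_lo) (le_pq mux_hi) (le_pq mux_sel).
by case: (p.1 mux_lo); case: (q.1 mux_lo); case: (p.1 mux_hi); case: (q.1 mux_hi);
   case: (p.1 mux_sel); case: (q.1 mux_sel); case: (p.2 mux_sel); case: (q.2 mux_sel).
Qed.
Definition mux3 : dM 3 := exist (@monob 3) _ mux3_mono.

Definition triple n (a b c : dM n) (k : 'I_3) : dM n :=
  match nat_of_ord k with 0 => a | 1 => b | _ => c end.

Definition mux n (a b c : dM n) : dM n := subst mux3 (triple a b c).

Lemma mux0 n (a b : dM n) : mux a b (dMconst n false) = a.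
Proof. by apply: dM_ext => p; rewrite val_subst !ffunE /= andbT andbF orbF. Qed.

Lemma mux1 n (a b : dM n) : mux a b (dMconst n true) = b.
Proof. by apply: dM_ext => p; rewrite val_subst !ffunE /= andbF andbT. Qed.

Lemma subst_mux n k (a b c : dM n) (g : 'I_n -> dM k) :
  subst (mux a b c) g = mux (subst a g) (subst b g) (subst c g).
Proof.
rewrite /mux subst_assoc; congr (subst mux3 _).
by apply: functional_extensionality => -[[|[|[|k']]] ?].
Qed.

Definition hom_mux J n (f f' : hom J n) (t : dM J) : hom J n :=
  fun k => mux (f k) (f' k) t.

Lemma comp_hom_mux J J' n (f f' : hom J n) (t : dM J) (g : hom J' J) :
  Defs.comp (hom_mux f f' t) g = hom_mux (Defs.comp f g) (Defs.comp f' g) (Iact g t).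
Proof. by apply: functional_extensionality => k; rewrite /Defs.comp subst_mux. Qed.

Lemma hom_mux0 J n (f f' : hom J n) : hom_mux f f' (dMconst J false) = f.
Proof. by apply: functional_extensionality => k; rewrite /hom_mux mux0. Qed.

Lemma hom_mux1 J n (f f' : hom J n) : hom_mux f f' (dMconst J true) = f'.
Proof. by apply: functional_extensionality => k; rewrite /hom_mux mux1. Qed.

Definition degen I : hom I.+1 I := fun x => gen (lift ord_max x).
Arguments degen {I}.

Definition face I b : hom I I.+1 :=
  fun y => if unlift ord_max y is Some x then gen x else dMconst I b.
Arguments face {I}.

Lemma degen_face I b : Defs.comp degen (face b) = @idh I.
Proof.
by apply: functional_extensionality => x; rewrite /Defs.comp subst_gen /face liftK.
Qed.

Lemma Iact_face_degen I b (t : dM I) : Iact (face b) (Iact degen t) = t.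
Proof.
by rewrite /Iact subst_assoc -[fun j => _]/(Defs.comp _ _) degen_face subst_idh.
Qed.

Lemma Iact_face_mux I b (i j : dM I) :
  Iact (face b) (mux (Iact degen i) (Iact degen j) (gen ord_max))
  = mux i j (dMconst I b).
Proof.
rewrite [LHS]subst_mux -!/(Iact _ _) !Iact_face_degen.
by rewrite /Iact subst_gen /face unlift_none.
Qed.

Section Discrete.

Variable A : cset.

Definition discrete : Prop :=
  forall n m (f f' : hom n m) (x : A m), cact f x = cact f' x.

Lemma path_nat m n (f f' : hom m n) (x : A n) J J' (g : hom J' J)
    (h : hom J m) (t : dM J) :
  cact (hom_mux (Defs.comp f (Defs.comp h g)) (Defs.comp f' (Defs.comp h g))
          (Iact g t)) x
  = cact g (cact (hom_mux (Defs.comp f h) (Defs.comp f' h) t) x).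
Proof. by rewrite -cact_comp comp_hom_mux !comp_assoc. Qed.

Definition path_between m n (f f' : hom m n) (x : A n) : exp_el A m :=
  @ExpEl A m (fun J h t => cact (hom_mux (Defs.comp f h) (Defs.comp f' h) t) x)
    (path_nat f f' x).

Lemma ev_face I b (f : exp_el A I) (t : dM I.+1) :
  ev f (Iact (face b) t) = cact (face b) (f I.+1 degen t).
Proof. by rewrite /ev -(degen_face I b) ef_nat. Qed.

Lemma forall_paths_constP : forall_paths_const A <-> discrete.
Proof.
split=> [cA n m f f' x | dA I i j f].
  have := cA n (dMconst n false) (dMconst n true) (path_between f f' x).
  by rewrite /ev /= !comp_idh hom_mux0 hom_mux1.
set t := mux (Iact degen i) (Iact degen j) (gen ord_max).
have -> : i = Iact (face false) t by rewrite Iact_face_mux mux0.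
have -> : j = Iact (face true) t by rewrite Iact_face_mux mux1.
by rewrite !ev_face; apply: dA.
Qed.

Lemma iso_Delta_discrete a : cset_iso A (Delta a) -> discrete.
Proof.
move=> [phi [psi [psiK _]]] n m f f' x.
by rewrite -(psiK _ (cact f x)) -(psiK _ (cact f' x)) !(nt_nat phi).
Qed.

Definition vertex0 n : hom 0 n := fun _ => dMconst 0 false.
Definition to_point n : hom n 0 := fun _ => dMconst n false.
Arguments vertex0 {n}.
Arguments to_point {n}.

Lemma discrete_iso_Delta : discrete -> cset_iso A (Delta (A 0)).
Proof.
move=> dA.
have vertex0_nat n m (f : hom n m) (x : A m) :
    cact vertex0 (cact f x) = cact vertex0 x.
  by rewrite -cact_comp; apply: dA.
have to_point_nat n m (f : hom n m) (y : A 0) :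
    cact to_point y = cact f (cact to_point y).
  by rewrite -cact_comp; apply: dA.
exists (@NatTrans A (Delta (A 0)) _ vertex0_nat).
exists (@NatTrans (Delta (A 0)) A _ to_point_nat).
by split=> n x /=; rewrite -cact_comp (dA _ _ _ (@idh _)) cact_id.
Qed.

End Discrete.

Theorem mainTheorem5 (A : cset) :
  forall_paths_const A <-> exists a : Type, cset_iso A (Delta a).
Proof.
split=> [/forall_paths_constP dA | [a /iso_Delta_discrete dA]].
  by exists (A 0); apply: discrete_iso_Delta.
exact/forall_paths_constP.
Qed.
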